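(* For any complex numbers $a,b,\alpha,\beta,\xi,\eta$ with $\beta a-\alpha b\neq0$, any natural number $n\ge1$, and any integer $k\ge0$ (with $k\le\lfloor n/2\rfloor$ in the first identity and $k\le\lfloor (n-1)/2\rfloor$ in the second), \[ \sum_{r=k}^{\lfloor n/2\rfloor}\binom{r}{k}\Psi\left(\begin{array}{cc|c} a & b & n \\ \alpha & \beta & r \end{array}\right)\xi^{\lfloor n/2\rfloor-r}\eta^{r-k}=\Psi\left(\begin{array}{cc|c} a\xi-\alpha\eta & b\xi-\beta\eta & n \\ \alpha & \beta & k \end{array}\right), \] \[ \sum_{r=k}^{\lfloor (n-1)/2\rfloor}\binom{r}{k}\Phi\left(\begin{array}{cc|c} a & b & n \\ \alpha & \beta & r \end{array}\right)\xi^{\lfloor (n-1)/2\rfloor-r}\eta^{r-k}=\Phi\left(\begin{array}{cc|c} a\xi-\alpha\eta & b\xi-\beta\eta & n \\ \alpha & \beta & k \end{array}\right). \]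
   Context: $\delta(m)=1$ for $m$ odd, $0$ for $m$ even; $\lfloor\cdot\rfloor$ is the floor. For indeterminates $a,b,\alpha,\beta$ and $n\ge1$, $\Psi\left(\begin{array}{cc|c} a & b & n \\ \alpha & \beta & r \end{array}\right)$ ($0\le r\le\lfloor n/2\rfloor$) and $\Phi\left(\begin{array}{cc|c} a & b & n \\ \alpha & \beta & r \end{array}\right)$ ($0\le r\le\lfloor (n-1)/2\rfloor$) are the unique polynomials in $\mathbb{Z}[a,b,\alpha,\beta]$ such that, identically in $x,y$, $(\beta a-\alpha b)^{\lfloor n/2\rfloor}\frac{x^n+y^n}{(x+y)^{\delta(n)}}=\sum_{r}\Psi\left(\begin{array}{cc|c} a & b & n \\ \alpha & \beta & r \end{array}\right)(\alpha x^2+\beta xy+\alpha y^2)^{\lfloor n/2\rfloor-r}(ax^2+bxy+ay^2)^r$ and $(\beta a-\alpha b)^{\lfloor (n-1)/2\rfloor}\frac{x^n-y^n}{(x-y)(x+y)^{\delta(n-1)}}=\sum_{r}\Phi\left(\begin{array}{cc|c} a & b & n \\ \alpha & \beta & r \end{array}\right)(\alpha x^2+\beta xy+\alpha y^2)^{\lfloor (n-1)/2\rfloor-r}(ax^2+bxy+ay^2)^r$; for numerical arguments these polynomials are evaluated. *)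

From HB Require Import structures.
From mathcomp Require Import all_boot all_order all_algebra.
From mathcomp Require Import mpoly.
Set Implicit Arguments. Unset Strict Implicit. Unset Printing Implicit Defensive.
Import Order.TTheory GRing.Theory Num.Theory.
Local Open Scope ring_scope.

Definition evalZ4 (C : ringType) (p : {mpoly int[4]}) (a b al be : C) : C :=
  mmap (fun z : int => z%:~R) [fun i : 'I_4 => if val i == 0%N then a
          else if val i == 1%N then b else if val i == 2%N then al else be] p.

Definition delta (m : nat) : nat := odd m.

(* Psi n : nat -> {mpoly int[4]} is the family (r = 0..floor(n/2)) of the
   polynomials Psi(a b n; alpha beta r): the defining identity, identically in
   x, y (stated as an identity of polynomial functions over C, with the
   division by (x+y)^delta(n) cleared). *)
Definition is_Psi_family (C : ringType) (n : nat) (Psi : nat -> {mpoly int[4]}) :=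
  forall a b al be x y : C,
    (be * a - al * b) ^+ (n./2) * (x ^+ n + y ^+ n) =
    (x + y) ^+ delta n *
    \sum_(r < (n./2).+1)
      evalZ4 (Psi r) a b al be
      * (al * x ^+ 2 + be * x * y + al * y ^+ 2) ^+ (n./2 - r)
      * (a * x ^+ 2 + b * x * y + a * y ^+ 2) ^+ r.

Definition is_Phi_family (C : ringType) (n : nat) (Phi : nat -> {mpoly int[4]}) :=
  forall a b al be x y : C,
    (be * a - al * b) ^+ (n.-1./2) * (x ^+ n - y ^+ n) =
    (x - y) * (x + y) ^+ delta n.-1 *
    \sum_(r < (n.-1./2).+1)
      evalZ4 (Phi r) a b al be
      * (al * x ^+ 2 + be * x * y + al * y ^+ 2) ^+ (n.-1./2 - r)
      * (a * x ^+ 2 + b * x * y + a * y ^+ 2) ^+ r.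

From HB Require Import structures.
From mathcomp Require Import all_boot all_order all_algebra.
From mathcomp Require Import mpoly.
From mathcomp Require Import ring.
Set Implicit Arguments. Unset Strict Implicit. Unset Printing Implicit Defensive.
Import Order.TTheory GRing.Theory Num.Theory.
Local Open Scope ring_scope.

(* Write Q_(a,b) = a x^2 + b x y + a y^2 and a' = a xi - al eta, b' = b xi - be eta.
   Then xi Q_(a,b) = Q_(a',b') + eta Q_(al,be) and be a' - al b' = xi (be a - al b),
   so multiplying the defining identity for (a, b) by xi^m and expanding each
   (xi Q_(a,b))^r binomially gives an identity of the same shape for (a', b'),
   whose coefficients are the left-hand sums.  When be a - al b != 0 the products
   Q_(al,be)^(m-r) Q_(a,b)^r are linearly independent, since on the line x + y = 1
   the ratio Q_(a,b) / Q_(al,be) takes all but finitely many values; hence these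
   coefficients are those of Psi (resp. Phi) at (a', b') whenever xi != 0.  Both
   sides are polynomials in xi, so the case xi = 0 follows. *)

Definition qform {R : pzRingType} (a b x y : R) := a * x ^+ 2 + b * x * y + a * y ^+ 2.

Lemma poly_eq0_of_horner (R : numDomainType) (p : {poly R}) :
  (forall t, p.[t] = 0) -> p = 0.
Proof.
move=> p0; apply: (@roots_geq_poly_eq0 _ p [seq i%:R | i <- iota 0 (size p)]).
- by apply/allP => z /mapP [i _ ->]; apply/rootP.
- by rewrite map_inj_uniq ?iota_uniq // => i j /eqP; rewrite eqr_nat => /eqP.
- by rewrite size_map size_iota.
Qed.

Lemma poly_eq0_of_horner_cofinite (R : numDomainType) (p : {poly R}) (s : seq R) :
  (forall t, t \notin s -> p.[t] = 0) -> p = 0.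
Proof.
move=> p0; have : p * \prod_(z <- s) ('X - z%:P) = 0.
  apply: poly_eq0_of_horner => t; rewrite hornerM horner_prod.
  have [ts|/p0 ->] := boolP (t \in s); last by rewrite mul0r.
  by rewrite (big_rem _ ts) /= hornerXsubC subrr mul0r mulr0.
by move/eqP; rewrite mulf_eq0 (negPf (monic_neq0 (monic_prod_XsubC _ _ _))) orbF => /eqP.
Qed.

(* When v = 0 (so that u / v = 0) the first hypothesis alone suffices. *)
Lemma subr_mul_neq0 (F : fieldType) (u v t : F) :
  (u != 0) || (v != 0) -> t != u / v -> u - v * t != 0.
Proof.
have [-> uv _|v0 _ tuv] := eqVneq v 0; first by rewrite mul0r subr0 orbF in uv *.
have -> : u - v * t = v * (u / v - t) by field.
by rewrite mulf_neq0 // subr_eq0 eq_sym.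
Qed.

Lemma shifted_pair_neq0 (R : comPzRingType) (a b al be s : R) :
  be * a - al * b != 0 -> (b + s * a != 0) || (be + s * al != 0).
Proof.
move=> hdet; rewrite -negb_and; apply: contra hdet => /andP[/eqP h1 /eqP h2].
have -> : be * a - al * b = a * (be + s * al) - al * (b + s * a) by ring.
by rewrite h1 h2 !mulr0 subrr.
Qed.

Lemma sum1_prod_solvable (C : numClosedFieldType) (p : C) :
  1 - 4 * p != 0 -> exists x y : C, [/\ x + y = 1, x != y & x * y = p].
Proof.
move=> h4; set s := sqrtC (1 - 4 * p).
have hs2 : s ^+ 2 = 1 - 4 * p by rewrite /s sqrtCK.
have hs0 : s != 0 by apply: contra h4 => /eqP s0; rewrite -hs2 s0 expr0n.
have h2 : (2 : C) != 0 by rewrite pnatr_eq0.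
exists ((1 + s) / 2), ((1 - s) / 2); split; first by field.
  apply: contra hs0 => /eqP h; have -> : s = (1 + s) / 2 - (1 - s) / 2 by field.
  by rewrite h subrr.
have -> : (1 + s) / 2 * ((1 - s) / 2) = (1 - s ^+ 2) / 4 by field.
by rewrite hs2; field.
Qed.

Lemma qform_sum1 (R : comPzRingType) (a b x y : R) :
  x + y = 1 -> qform a b x y = a + (b - 2 * a) * (x * y).
Proof.
have -> : qform a b x y = a * (x + y) ^+ 2 + (b - 2 * a) * (x * y) by rewrite /qform; ring.
by move=> ->; rewrite expr1n mulr1.
Qed.

(* On the line x + y = 1 both forms are affine in p = x y, so their ratio is a
   Moebius function of p; the excluded values of t are its values at p = oo
   and at p = 1/4, where x = y. *)
Lemma qform_ratio_attained (C : numClosedFieldType) (a b al be t : C) :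
  be * a - al * b != 0 ->
  t \notin [:: (b - 2 * a) / (be - 2 * al); (b + 2 * a) / (be + 2 * al)] ->
  exists x y, [/\ x + y = 1, x != y, qform al be x y != 0
                 & qform a b x y = t * qform al be x y].
Proof.
rewrite !inE negb_or => hdet /andP[t1 t2].
have hD : (b - 2 * a) - (be - 2 * al) * t != 0.
  by apply: subr_mul_neq0 => //; have := shifted_pair_neq0 (-2) hdet; rewrite !mulNr.
have hF : (b + 2 * a) - (be + 2 * al) * t != 0.
  by apply: subr_mul_neq0 => //; apply: shifted_pair_neq0.
set D := _ - _ * t in hD; pose p := (t * al - a) / D.
have h4 : 1 - 4 * p != 0.
  have -> : 1 - 4 * p = ((b + 2 * a) - (be + 2 * al) * t) / D by rewrite /p /D; field.
  by rewrite mulf_neq0 ?invr_eq0.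
have [x [y [hxy hne hp]]] := sum1_prod_solvable h4.
exists x, y; rewrite !qform_sum1 // hp; split => //.
  have -> : al + (be - 2 * al) * p = - (be * a - al * b) / D by rewrite /p /D; field.
  by rewrite mulf_neq0 ?oppr_eq0 ?invr_eq0.
by rewrite /p /D; field.
Qed.

Lemma qform_coef_unique (C : numClosedFieldType) (m : nat) (e e' : nat -> C)
    (a b al be : C) :
  be * a - al * b != 0 ->
  (forall x y, x + y = 1 -> x != y ->
     \sum_(r < m.+1) e r * qform al be x y ^+ (m - r) * qform a b x y ^+ r =
     \sum_(r < m.+1) e' r * qform al be x y ^+ (m - r) * qform a b x y ^+ r) ->
  forall r, (r <= m)%N -> e r = e' r.
Proof.
move=> hdet he; pose E := \poly_(i < m.+1) (e i - e' i).
suff E0 : E = 0.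
  move=> r hr; apply/eqP; rewrite -subr_eq0; apply/eqP.
  by have := congr1 (coefp r) E0; rewrite /= coef_poly ltnS hr coef0.
apply: (poly_eq0_of_horner_cofinite (s := [:: (b - 2 * a) / (be - 2 * al);
                                             (b + 2 * a) / (be + 2 * al)])) => t ht.
have [x [y [hxy hne hL hQ]]] := qform_ratio_attained hdet ht.
have := he x y hxy hne; rewrite hQ; set L := qform al be x y.
have sum_ratio f : \sum_(r < m.+1) f r * L ^+ (m - r) * (t * L) ^+ r =
                   L ^+ m * \sum_(r < m.+1) f r * t ^+ r.
  rewrite mulr_sumr; apply: eq_bigr => i _.
  have -> : L ^+ m = L ^+ (m - i) * L ^+ i by rewrite -exprD subnK // -ltnS.
  by rewrite exprMn; ring.
rewrite !sum_ratio => /(mulfI (expf_neq0 m hL)) hsum.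
by rewrite horner_poly; under eq_bigr do rewrite mulrBl; rewrite sumrB hsum subrr.
Qed.

Lemma sum_binomial_shift (R : comPzRingType) (c : nat -> R) (m : nat) (xi eta u v w : R) :
  v * xi = w + eta * u ->
  xi ^+ m * \sum_(r < m.+1) c r * u ^+ (m - r) * v ^+ r =
  \sum_(k < m.+1)
     (\sum_(k <= r < m.+1) 'C(r, k)%:R * c r * xi ^+ (m - r) * eta ^+ (r - k))
     * u ^+ (m - k) * w ^+ k.
Proof.
move=> hv.
pose T k r := 'C(r, k)%:R * c r * xi ^+ (m - r) * eta ^+ (r - k) * u ^+ (m - k) * w ^+ k.
(* 'C(r, k) = 0 for r < k lets both triangular sums range over the full square. *)
have T0 k r : (r < k)%N -> T k r = 0 by move/bin_small; rewrite /T => ->; rewrite !mul0r.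
transitivity (\sum_(r < m.+1) \sum_(k < m.+1) T k r); last first.
  rewrite exchange_big; apply: eq_bigr => k _.
  rewrite !big_distrl [RHS]big_geq_mkord [RHS]big_mkcond; apply: eq_bigr => r _ /=.
  by case: leqP => [//|/T0 <-].
rewrite mulr_sumr; apply: eq_bigr => r _ /=.
have hr : (r <= m)%N by rewrite -ltnS.
have -> : xi ^+ m * (c r * u ^+ (m - r) * v ^+ r) =
          c r * xi ^+ (m - r) * u ^+ (m - r) * (eta * u + w) ^+ r.
  by rewrite addrC -hv -{1}(subnK hr) exprD exprMn; ring.
transitivity (\sum_(k < r.+1) T k r); last first.
  rewrite (big_ord_widen m.+1 (T^~ r)) // big_mkcond; apply: eq_bigr => k _ /=.
  by case: ltnP => // /T0 ->.
rewrite exprDn mulr_sumr; apply: eq_bigr => k _.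
have hk : (k <= r)%N by rewrite -ltnS.
rewrite /T; have -> : u ^+ (m - k) = u ^+ (m - r) * u ^+ (r - k).
  by rewrite -exprD addnBA // subnK.
by rewrite exprMn -mulr_natl; ring.
Qed.

Lemma qform_shift (R : comPzRingType) (a b al be xi eta x y : R) :
  qform (a * xi - al * eta) (b * xi - be * eta) x y =
  xi * qform a b x y - eta * qform al be x y.
Proof. by rewrite /qform; ring. Qed.

Definition is_qform_expansion (C : pzRingType) (m : nat) (al be : C)
    (c : C -> C -> nat -> C) (W : C -> C -> C) :=
  forall a b x y, x + y = 1 -> x != y ->
    (be * a - al * b) ^+ m * W x y =
    \sum_(r < m.+1) c a b r * qform al be x y ^+ (m - r) * qform a b x y ^+ r.

Lemma expansion_shift_nz (C : numClosedFieldType) (m : nat) (al be : C)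
    (c : C -> C -> nat -> C) (W : C -> C -> C) (a b xi eta : C) :
  is_qform_expansion m al be c W -> be * a - al * b != 0 -> xi != 0 ->
  forall k, (k <= m)%N ->
  \sum_(k <= r < m.+1) 'C(r, k)%:R * c a b r * xi ^+ (m - r) * eta ^+ (r - k)
  = c (a * xi - al * eta) (b * xi - be * eta) k.
Proof.
move=> hc hdet hxi; set a' := a * xi - al * eta; set b' := b * xi - be * eta.
have hdet' : be * a' - al * b' = xi * (be * a - al * b) by rewrite /a' /b'; ring.
apply: (qform_coef_unique (a := a') (b := b') (al := al) (be := be)) => [|x y hxy hne];
  first by rewrite hdet' mulf_neq0.
rewrite -hc // -(@sum_binomial_shift _ (c a b) m xi eta _ (qform a b x y)); last first.
  by rewrite qform_shift; ring.
by rewrite -hc // hdet' exprMn mulrA.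
Qed.

Lemma evalZ4_rmorph (R S : nzRingType) (f : {rmorphism R -> S}) (p : {mpoly int[4]})
    (a b al be : R) :
  f (evalZ4 p a b al be) = evalZ4 p (f a) (f b) (f al) (f be).
Proof.
rewrite /evalZ4 /mmap rmorph_sum; apply: eq_bigr => mm _.
rewrite rmorphM rmorph_int rmorph_prod; congr (_ * _); apply: eq_bigr => i _.
by rewrite rmorphXn /=; case: ifP => // _; case: ifP => // _; case: ifP.
Qed.

Lemma expansion_shift (C : numClosedFieldType) (m : nat) (al be : C)
    (F : nat -> {mpoly int[4]}) (W : C -> C -> C) (a b xi eta : C) :
  is_qform_expansion m al be (fun a b r => evalZ4 (F r) a b al be) W ->
  be * a - al * b != 0 -> forall k, (k <= m)%N ->
  \sum_(k <= r < m.+1) 'C(r, k)%:R * evalZ4 (F r) a b al be * xi ^+ (m - r) * eta ^+ (r - k)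
  = evalZ4 (F k) (a * xi - al * eta) (b * xi - be * eta) al be.
Proof.
move=> hF hdet k hk.
pose P := evalZ4 (F k) (a *: 'X - (al * eta)%:P) (b *: 'X - (be * eta)%:P) al%:P be%:P.
pose L := \sum_(k <= r < m.+1)
  ('C(r, k)%:R * evalZ4 (F r) a b al be * eta ^+ (r - k)) *: 'X^(m - r).
have hP t : P.[t] = evalZ4 (F k) (a * t - al * eta) (b * t - be * eta) al be.
  by rewrite -horner_evalE evalZ4_rmorph /= !horner_evalE !hornerE.
have hL t : L.[t] = \sum_(k <= r < m.+1)
    'C(r, k)%:R * evalZ4 (F r) a b al be * t ^+ (m - r) * eta ^+ (r - k).
  by rewrite horner_sum; apply: eq_bigr => r _; rewrite hornerZ hornerXn; ring.
suff /eqP : L - P = 0 by rewrite subr_eq0 => /eqP /(congr1 (horner^~ xi)); rewrite /= hL hP.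
apply: (poly_eq0_of_horner_cofinite (s := [:: 0])) => t; rewrite inE => ht.
by rewrite hornerD hornerN hL hP (expansion_shift_nz eta hF hdet ht hk) subrr.
Qed.

Theorem theorem10p6 (C : numClosedFieldType) (n : nat) (hn : (1 <= n)%N)
  (Psi Phi : nat -> {mpoly int[4]})
  (hPsi : is_Psi_family C n Psi) (hPhi : is_Phi_family C n Phi)
  (a b al be xi eta : C) (hdet : be * a - al * b != 0) :
  (forall k : nat, (k <= n./2)%N ->
     \sum_(k <= r < (n./2).+1)
        'C(r, k)%:R * evalZ4 (Psi r) a b al be * xi ^+ (n./2 - r) * eta ^+ (r - k)
     = evalZ4 (Psi k) (a * xi - al * eta) (b * xi - be * eta) al be)
  /\
  (forall k : nat, (k <= n.-1./2)%N ->
     \sum_(k <= r < (n.-1./2).+1)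
        'C(r, k)%:R * evalZ4 (Phi r) a b al be * xi ^+ (n.-1./2 - r) * eta ^+ (r - k)
     = evalZ4 (Phi k) (a * xi - al * eta) (b * xi - be * eta) al be).
Proof.
split.
  apply: (expansion_shift (W := fun x y => x ^+ n + y ^+ n)) => // a' b' x y hxy _.
  by rewrite hPsi hxy expr1n mul1r.
apply: (expansion_shift (W := fun x y => (x ^+ n - y ^+ n) / (x - y))) => // a' b' x y hxy hne.
have hxy' : x - y != 0 by rewrite subr_eq0.
by rewrite mulrA hPhi hxy expr1n mulr1 /qform; field.
Qed.
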